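(* The singular curves on the phase torus (the set of pairs $(\phi_{z,1},\phi_{z,2})$ for which the curve $K$ fails to be a knot because some crossing of its $xy$-projection becomes a double point in space) are of four possible types: 1. Lines of the form $\phi_{z,2}=c$, 2. Lines of the form $\phi_{z,1}=c$, 3. Lines of the form $\phi_{z,2}=\pm \phi_{z,1}+c$, 4. Curves with the shape of $\sin(\phi_{z,2})=c \sin(\phi_{z,1})$, where $c$ is a constant that, in the last case, is neither $0$ nor $\pm 1$.
   Context: Let $K$ be a Fourier-$(1,1,2)$ knot parameterized, for $0\le t\le 2\pi$, by $x(t)=\cos(n_x t)$, $y(t)=\cos(n_y t+\phi_y)$, $z(t)=\cos(n_{z,1}t+\phi_{z,1})+A_{z,2}\cos(n_{z,2}t+\phi_{z,2})$, where $n_x,n_y,n_{z,1},n_{z,2}$ are integers such that $n_x$, $n_y$ and $\gcd(n_{z,1},n_{z,2})$ are pairwise relatively prime, $A_{z,2}$ is a real amplitude, and $\phi_y$ is fixed (with $\phi_x=0$). The phase torus is the 2-dimensional torus of pairs $(\phi_{z,1},\phi_{z,2})$. *)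

From Stdlib Require Import Reals ZArith List.
Open Scope R_scope.

(* Fourier-(1,1,2) curve, 0 <= t <= 2*PI, phi_x = 0. *)
Definition kx (nx : Z) (t : R) : R := cos (IZR nx * t).
Definition ky (ny : Z) (phy : R) (t : R) : R := cos (IZR ny * t + phy).
Definition kz (n1 n2 : Z) (A phi1 phi2 : R) (t : R) : R :=
  cos (IZR n1 * t + phi1) + A * cos (IZR n2 * t + phi2).

Definition is_crossing (nx ny : Z) (phy : R) (t s : R) : Prop :=
  0 <= t < 2 * PI /\ 0 <= s < 2 * PI /\ t <> s /\
  kx nx t = kx nx s /\ ky ny phy t = ky ny phy s.

(* Non-degenerate projection: only finitely many crossing parameter pairs
   (excludes the doubly-traced Lissajous case, where "crossings" are not
   isolated). *)
Definition finitely_many_crossings (nx ny : Z) (phy : R) : Prop :=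
  exists l : list (R * R), forall t s, is_crossing nx ny phy t s -> In (t, s) l.

(* The singular set on the phase torus (lifted to R x R, 2*PI-periodic)
   belonging to the crossing (t, s): the phases for which this crossing
   becomes a double point in space. *)
Definition singular_set (n1 n2 : Z) (A : R) (t s : R) (phi1 phi2 : R) : Prop :=
  kz n1 n2 A phi1 phi2 t = kz n1 n2 A phi1 phi2 s.

Definition type1 (S : R -> R -> Prop) : Prop :=
  exists c : R, forall phi1 phi2,
    S phi1 phi2 <-> exists k : Z, phi2 = c + IZR k * PI.

Definition type2 (S : R -> R -> Prop) : Prop :=
  exists c : R, forall phi1 phi2,
    S phi1 phi2 <-> exists k : Z, phi1 = c + IZR k * PI.

Definition type3 (S : R -> R -> Prop) : Prop :=
  exists c c' : R, forall phi1 phi2,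
    S phi1 phi2 <-> exists k : Z,
      phi2 = phi1 + c + 2 * IZR k * PI \/ phi2 = - phi1 + c' + 2 * IZR k * PI.

Definition type4 (S : R -> R -> Prop) : Prop :=
  exists c d1 d2 : R, c <> 0 /\ c <> 1 /\ c <> -1 /\
    forall phi1 phi2, S phi1 phi2 <-> sin (phi2 + d2) = c * sin (phi1 + d1).

(* Writing δ = (t-s)/2 and σ = (t+s)/2, sum-to-product turns the equation
   z(t) = z(s) into  sin(n1 δ) sin(φ1 + n1 σ) + A sin(n2 δ) sin(φ2 + n2 σ) = 0,
   a linear relation a sin u + B sin v = 0 between two shifted phases.  Its
   zero set is a line φ2 = c when a = 0, a line φ1 = c when B = 0, a pair of
   diagonal line families when a = ±B, and a curve sin v = c sin u otherwise.
   The only thing to exclude is a = B = 0: by Bezout, sin(n1 δ) = sin(n2 δ) = 0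
   and sin(nx δ) = 0 (or sin(ny δ) = 0) would force δ ∈ πZ, impossible for
   distinct parameters in [0, 2π); and if instead the xy-crossing comes from
   the σ-factors, every pair (x, t+s-x) is a crossing as well, contradicting
   finiteness. *)

From Stdlib Require Import Reals ZArith List Lra Lia.
Open Scope R_scope.

Definition singular_curve_type (S : R -> R -> Prop) : Prop :=
  type1 S \/ type2 S \/ type3 S \/ type4 S.

Lemma singular_curve_type_ext (S S' : R -> R -> Prop) :
  (forall phi1 phi2, S phi1 phi2 <-> S' phi1 phi2) ->
  singular_curve_type S -> singular_curve_type S'.
Proof.
  intros E. unfold singular_curve_type, type1, type2, type3, type4.
  setoid_rewrite E. auto.
Qed.

Lemma cos_affine_sub (n p t s : R) :
  cos (n * t + p) - cos (n * s + p) =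
  -2 * sin (n * ((t - s) / 2)) * sin (p + n * ((t + s) / 2)).
Proof.
  rewrite form2.
  replace ((n * t + p - (n * s + p)) / 2) with (n * ((t - s) / 2)) by field.
  replace ((n * t + p + (n * s + p)) / 2) with (p + n * ((t + s) / 2)) by field.
  reflexivity.
Qed.

Lemma cos_affine_eq_iff (n p t s : R) :
  cos (n * t + p) = cos (n * s + p) <->
  sin (n * ((t - s) / 2)) * sin (p + n * ((t + s) / 2)) = 0.
Proof. pose proof (cos_affine_sub n p t s). split; intro; lra. Qed.

Lemma sin_eq_sin_iff (a b : R) :
  sin a = sin b <->
  exists k : Z, a = b + 2 * IZR k * PI \/ a = PI - b + 2 * IZR k * PI.
Proof.
  pose proof (form4 a b) as F. split.
  - intros E. assert (H : cos ((a + b) / 2) * sin ((a - b) / 2) = 0) by lra.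
    destruct (Rmult_integral _ _ H) as [H1 | H1].
    + destruct (cos_eq_0_0 _ H1) as [k Hk]. exists k. right. lra.
    + destruct (sin_eq_0_0 _ H1) as [k Hk]. exists k. left. lra.
  - intros [k [Hk | Hk]].
    + assert (sin ((a - b) / 2) = 0) by (apply sin_eq_0_1; exists k; lra).
      nra.
    + assert (cos ((a + b) / 2) = 0) by (apply cos_eq_0_1; exists k; lra).
      nra.
Qed.

Lemma sin_add_eq_0_iff (x b : R) :
  sin (x + b) = 0 <-> exists k : Z, x = - b + IZR k * PI.
Proof.
  split.
  - intros H. destruct (sin_eq_0_0 _ H) as [k Hk]. exists k. lra.
  - intros [k Hk]. apply sin_eq_0_1. exists k. lra.
Qed.

Lemma sin_gcd_mul_eq_0 (n m : Z) (x : R) :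
  sin (IZR n * x) = 0 -> sin (IZR m * x) = 0 -> sin (IZR (Z.gcd n m) * x) = 0.
Proof.
  intros Hn Hm.
  destruct (sin_eq_0_0 _ Hn) as [k Hk].
  destruct (sin_eq_0_0 _ Hm) as [l Hl].
  destruct (Z.gcd_bezout n m _ eq_refl) as [u [v E]].
  apply sin_eq_0_1. exists (u * k + v * l)%Z.
  rewrite <- E, plus_IZR, !mult_IZR, plus_IZR, !mult_IZR.
  replace ((IZR u * IZR n + IZR v * IZR m) * x)
    with (IZR u * (IZR n * x) + IZR v * (IZR m * x)) by ring.
  rewrite Hk, Hl. ring.
Qed.

Lemma sin_half_diff_neq_0 (t s : R) :
  0 <= t < 2 * PI -> 0 <= s < 2 * PI -> t <> s -> sin ((t - s) / 2) <> 0.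
Proof.
  intros Ht Hs Hts H. pose proof PI_RGT_0.
  destruct (sin_eq_0_0 _ H) as [k Hk].
  assert (k < 1)%Z by (apply lt_IZR; apply Rnot_le_lt; intro; nra).
  assert (-1 < k)%Z by (apply lt_IZR; apply Rnot_le_lt; intro; nra).
  assert (k = 0%Z) by lia. subst k. lra.
Qed.

Lemma exists_notin_interval (l : list R) (a b : R) :
  a < b -> exists x, a < x < b /\ ~ In x l.
Proof.
  revert a b. induction l as [| y l IH]; intros a b Hab.
  - exists ((a + b) / 2). split; [lra | auto].
  - destruct (Rle_or_lt y a) as [Hy | Hy]; [| destruct (Rle_or_lt b y) as [Hy' | Hy']].
    + destruct (IH a b Hab) as [x [Hx Hn]].
      exists x. split; [exact Hx |]. intros [E | E]; [lra | auto].
    + destruct (IH a b Hab) as [x [Hx Hn]].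
      exists x. split; [exact Hx |]. intros [E | E]; [lra | auto].
    + destruct (IH a y Hy) as [x [Hx Hn]].
      exists x. split; [lra |]. intros [E | E]; [lra | auto].
Qed.

Lemma kx_eq_iff (nx : Z) (t s : R) :
  kx nx t = kx nx s <->
  sin (IZR nx * ((t - s) / 2)) * sin (IZR nx * ((t + s) / 2)) = 0.
Proof.
  unfold kx. rewrite <- (Rplus_0_r (IZR nx * t)), <- (Rplus_0_r (IZR nx * s)).
  rewrite cos_affine_eq_iff, Rplus_0_l. reflexivity.
Qed.

Lemma ky_eq_iff (ny : Z) (phy t s : R) :
  ky ny phy t = ky ny phy s <->
  sin (IZR ny * ((t - s) / 2)) * sin (phy + IZR ny * ((t + s) / 2)) = 0.
Proof. apply cos_affine_eq_iff. Qed.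

Lemma kz_eq_iff (n1 n2 : Z) (A phi1 phi2 t s : R) :
  kz n1 n2 A phi1 phi2 t = kz n1 n2 A phi1 phi2 s <->
  sin (IZR n1 * ((t - s) / 2)) * sin (phi1 + IZR n1 * ((t + s) / 2)) +
  A * sin (IZR n2 * ((t - s) / 2)) * sin (phi2 + IZR n2 * ((t + s) / 2)) = 0.
Proof.
  unfold kz.
  pose proof (cos_affine_sub (IZR n1) phi1 t s).
  pose proof (cos_affine_sub (IZR n2) phi2 t s).
  split; intro; nra.
Qed.

Lemma reflected_crossings_not_finite (nx ny : Z) (phy t s : R) :
  0 <= t < 2 * PI -> 0 <= s < 2 * PI -> t <> s ->
  (forall x, kx nx x = kx nx (t + s - x) /\ ky ny phy x = ky ny phy (t + s - x)) ->
  ~ finitely_many_crossings nx ny phy.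
Proof.
  intros Ht Hs Hts Hrefl [l Hl].
  assert (Hmin : Rmin t s < (t + s) / 2) by (apply Rmin_case_strong; intro; lra).
  destruct (exists_notin_interval (map fst l) _ _ Hmin) as [x [Hx Hnotin]].
  apply Hnotin. change x with (fst (x, t + s - x)). apply in_map, Hl.
  assert (Hbound : 0 <= Rmin t s /\ t + s - Rmin t s < 2 * PI)
    by (apply Rmin_case; lra).
  destruct Hbound, (Hrefl x). repeat split; auto; lra.
Qed.

Lemma crossing_sin_half_diff_neq_0 (nx ny n1 n2 : Z) (phy t s : R) :
  Z.gcd nx (Z.gcd n1 n2) = 1%Z ->
  Z.gcd ny (Z.gcd n1 n2) = 1%Z ->
  finitely_many_crossings nx ny phy ->
  is_crossing nx ny phy t s ->
  sin (IZR n1 * ((t - s) / 2)) <> 0 \/ sin (IZR n2 * ((t - s) / 2)) <> 0.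
Proof.
  intros Gx Gy Hfin (Ht & Hs & Hts & Hx & Hy).
  destruct (Req_dec (sin (IZR n1 * ((t - s) / 2))) 0) as [H1 | H1]; [| auto].
  destruct (Req_dec (sin (IZR n2 * ((t - s) / 2))) 0) as [H2 | H2]; [| auto].
  exfalso.
  pose proof (sin_gcd_mul_eq_0 _ _ _ H1 H2) as H12.
  pose proof (sin_half_diff_neq_0 _ _ Ht Hs Hts) as Hd.
  rewrite kx_eq_iff in Hx. rewrite ky_eq_iff in Hy.
  destruct (Rmult_integral _ _ Hx) as [Dx | Sx].
  { apply Hd. rewrite <- (Rmult_1_l ((t - s) / 2)).
    change 1 with (IZR 1). rewrite <- Gx. exact (sin_gcd_mul_eq_0 _ _ _ Dx H12). }
  destruct (Rmult_integral _ _ Hy) as [Dy | Sy].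
  { apply Hd. rewrite <- (Rmult_1_l ((t - s) / 2)).
    change 1 with (IZR 1). rewrite <- Gy. exact (sin_gcd_mul_eq_0 _ _ _ Dy H12). }
  apply (reflected_crossings_not_finite nx ny phy t s); auto.
  intros x. rewrite kx_eq_iff, ky_eq_iff.
  replace ((x + (t + s - x)) / 2) with ((t + s) / 2) by field.
  rewrite Sx, Sy. split; ring.
Qed.

Lemma sin_eq_scaled_sin_type (c b1 b2 : R) :
  singular_curve_type (fun phi1 phi2 => sin (phi2 + b2) = c * sin (phi1 + b1)).
Proof.
  destruct (Req_dec c 0) as [H0 | H0].
  { left. exists (- b2). intros phi1 phi2.
    rewrite H0, Rmult_0_l. apply sin_add_eq_0_iff. }
  destruct (Req_dec c 1) as [H1 | H1].
  { right; right; left. exists (b1 - b2), (PI - b1 - b2). intros phi1 phi2.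
    rewrite H1, Rmult_1_l, sin_eq_sin_iff.
    split; intros [k [Hk | Hk]]; exists k; [left | right | left | right]; lra. }
  destruct (Req_dec c (-1)) as [Hm1 | Hm1].
  { right; right; left. exists (PI + b1 - b2), (- b1 - b2). intros phi1 phi2.
    replace (c * sin (phi1 + b1)) with (sin (- (phi1 + b1)))
      by (rewrite sin_neg, Hm1; ring).
    rewrite sin_eq_sin_iff.
    split; intros [k [Hk | Hk]]; exists k; [right | left | right | left]; lra. }
  right; right; right. exists c, b1, b2. repeat split; auto.
Qed.

Lemma sin_comb_eq_0_type (a B b1 b2 : R) :
  a <> 0 \/ B <> 0 ->
  singular_curve_type
    (fun phi1 phi2 => a * sin (phi1 + b1) + B * sin (phi2 + b2) = 0).
Proof.
  intros HaB. destruct (Req_dec B 0) as [HB | HB].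
  - right; left. exists (- b1). intros phi1 phi2.
    rewrite HB, <- sin_add_eq_0_iff.
    split; intro E; [| rewrite E]; [| ring].
    destruct HaB as [Ha | Ha]; [| contradiction].
    apply (Rmult_eq_reg_l a); lra.
  - apply (singular_curve_type_ext
      (fun phi1 phi2 => sin (phi2 + b2) = (- a / B) * sin (phi1 + b1))).
    + intros phi1 phi2. split; intro E.
      * rewrite E. field. exact HB.
      * apply (Rmult_eq_reg_l B); [| exact HB].
        replace (B * sin (phi2 + b2)) with (- (a * sin (phi1 + b1))) by lra.
        field. exact HB.
    + apply sin_eq_scaled_sin_type.
Qed.

Theorem proposition3 (nx ny n1 n2 : Z) (A phy : R) :
  Z.gcd nx ny = 1%Z ->
  Z.gcd nx (Z.gcd n1 n2) = 1%Z ->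
  Z.gcd ny (Z.gcd n1 n2) = 1%Z ->
  A <> 0 ->
  finitely_many_crossings nx ny phy ->
  forall t s : R, is_crossing nx ny phy t s ->
    type1 (singular_set n1 n2 A t s) \/
    type2 (singular_set n1 n2 A t s) \/
    type3 (singular_set n1 n2 A t s) \/
    type4 (singular_set n1 n2 A t s).
Proof.
  intros _ Gx Gy HA Hfin t s Hc.
  apply (singular_curve_type_ext (fun phi1 phi2 =>
    sin (IZR n1 * ((t - s) / 2)) * sin (phi1 + IZR n1 * ((t + s) / 2)) +
    A * sin (IZR n2 * ((t - s) / 2)) * sin (phi2 + IZR n2 * ((t + s) / 2)) = 0)).
  - intros phi1 phi2. unfold singular_set. rewrite kz_eq_iff. reflexivity.
  - apply sin_comb_eq_0_type.
    destruct (crossing_sin_half_diff_neq_0 _ _ _ _ _ _ _ Gx Gy Hfin Hc) as [H | H];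
      [left | right]; auto using Rmult_integral_contrapositive_currified.
Qed.
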